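(* Let $m,\Delta$ be positive integers, $X\subseteq\{-\Delta,\dots,\Delta\}^m$ and $x\in X$ such that $-x\in\mathrm{cone}(X\setminus\{x\})$. Then there is $\lambda\in\mathbb{Z}_{\ge0}^X$ with $\lambda_x>0$, at most $m+1$ non-zero components, $\|\lambda\|_\infty\le\Delta^m m^{m/2}$, and \[ -\lambda_x x=\sum_{y\in X\setminus\{x\}}\lambda_y y. \]
   Context: $\mathrm{cone}(Y)=\{\sum_{y\in Y}\lambda_y y:\lambda_y\ge0\}$. *)

From HB Require Import structures.
From mathcomp Require Import all_boot all_order all_algebra.
From mathcomp Require Import finmap.
Set Implicit Arguments. Unset Strict Implicit. Unset Printing Implicit Defensive.
Import Order.TTheory GRing.Theory Num.Theory.
Local Open Scope ring_scope.
Local Open Scope fset_scope.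

Definition in_cone (R : rcfType) (m : nat) (Y : {fset 'rV[int]_m}) (v : 'rV[R]_m) : Prop :=
  exists mu : 'rV[int]_m -> R,
    (forall y, y \in Y -> 0 <= mu y) /\
    v = \sum_(y <- Y) mu y *: map_mx (fun z : int => z%:~R) y.

From HB Require Import structures.
From mathcomp Require Import all_boot all_order all_algebra.
From mathcomp Require Import finmap.
Import Order.TTheory GRing.Theory Num.Theory.
Local Open Scope ring_scope.
Set Implicit Arguments. Unset Strict Implicit. Unset Printing Implicit Defensive.

(* By Caratheodory's theorem for cones, -x is a positive real combination of
   linearly independent vectors y_1, ..., y_k (k <= m) of X \ {x}.  Pick k
   coordinates on which the y_i form an invertible integer k x k matrix B.
   Cramer's rule then writes the coefficients as det B_i / det B, where B_i is B
   with its i-th row replaced by the restriction of -x; multiplying through by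
   |det B| gives integer coefficients |det B_i|, all nonnegative because they
   have the signs of the positive real ones.  Hadamard's inequality bounds the
   determinant of a k x k integer matrix with entries in [-Delta, Delta] by
   Delta^k k^(k/2) <= Delta^m m^(m/2). *)

Section GramDeterminant.
Variable R : realFieldType.

Lemma mulmx_trmx_row p (r : 'rV[R]_p) : (r *m r^T) 0 0 = \sum_j r 0 j ^+ 2.
Proof. by rewrite mxE; apply: eq_bigr => j _; rewrite mxE expr2. Qed.

Lemma mulmx_trmx_row_ge0 p (r : 'rV[R]_p) : 0 <= (r *m r^T) 0 0.
Proof. by rewrite mulmx_trmx_row sumr_ge0 // => j _; rewrite sqr_ge0. Qed.

Lemma mulmx_trmx_row_eq0 p (r : 'rV[R]_p) : r *m r^T = 0 -> r = 0.
Proof.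
move=> /matrixP /(_ 0 0); rewrite mulmx_trmx_row mxE => /eqP.
rewrite psumr_eq0 => [/allP r0|j _]; last exact: sqr_ge0.
apply/rowP => j; rewrite mxE; apply/eqP.
by rewrite -sqrf_eq0; apply: r0; rewrite mem_index_enum.
Qed.

Lemma row_free_gram n p (A : 'M[R]_(n, p)) : row_free (A *m A^T) = row_free A.
Proof.
apply/idP/idP => [freeG | freeA].
  by rewrite -row_leq_rank (leq_trans _ (mxrankM_maxl _ A^T)) // row_leq_rank.
apply: inj_row_free => u uG0; apply/eqP; rewrite -(mulmx_free_eq0 _ freeA).
apply/eqP/mulmx_trmx_row_eq0.
by rewrite trmx_mul mulmxA -(mulmxA u) uG0 mul0mx.
Qed.

Lemma det_gram_eq0 n p (A : 'M[R]_(n, p)) : ~~ row_free A -> \det (A *m A^T) = 0.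
Proof.
rewrite -row_free_gram row_free_unit unitmxE unitfE.
by apply: contraNeq.
Qed.

Lemma det_gram_col_mx n p (a : 'rV[R]_p) (A : 'M[R]_(n, p)) :
  0 <= \det (A *m A^T) ->
  0 <= \det (col_mx a A *m (col_mx a A)^T) <= (a *m a^T) 0 0 * \det (A *m A^T).
Proof.
move=> G_ge0; have [freeA | ] := boolP (row_free A); last first.
  rewrite -kermx_eq0 => /rowV0Pn [u /sub_kermxP uA0 u0].
  rewrite det_gram_eq0 ?lexx ?mulr_ge0 ?mulmx_trmx_row_ge0 //.
  apply/negP => /row_free_inj /(_ (row_mx 0 u) 0); rewrite mul_row_col mul0mx.
  rewrite uA0 addr0 mul0mx => /(_ erefl) /(congr1 rsubmx).
  by rewrite row_mxKr linear0 => u00; rewrite u00 eqxx in u0.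
set G := A *m A^T; have uG : G \in unitmx by rewrite -row_free_unit row_free_gram.
(* [b] is the component of [a] orthogonal to the rows of [A], so that the Gram
   determinant of [col_mx a A] is [|b|^2 det G]. *)
pose c := a *m A^T *m invmx G; pose b := a - c *m A.
have bA : b *m A^T = 0 by rewrite mulmxBl -(mulmxA c) (mulmxKV uG) subrr.
have Ab : A *m b^T = 0 by rewrite -[A]trmxK -trmx_mul bA trmx0.
have detE : \det (col_mx a A *m (col_mx a A)^T) = (b *m b^T) 0 0 * \det G.
  have -> : col_mx a A = block_mx 1%:M c 0 1%:M *m col_mx b A.
    by rewrite mul_block_col !mul1mx mul0mx add0r subrK.
  rewrite trmx_mul mulmxA det_mulmx -mulmxA det_mulmx det_tr det_ublock !det1.
  by rewrite !mul1r mulr1 tr_col_mx mul_col_row bA Ab det_ublock det_mx11.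
have aE : (a *m a^T) 0 0 = (b *m b^T) 0 0 + ((c *m A) *m (c *m A)^T) 0 0.
  have -> : a = b + c *m A by rewrite subrK.
  have bcA : b *m (c *m A)^T = 0 by rewrite trmx_mul mulmxA bA mul0mx.
  have cAb : c *m A *m b^T = 0 by rewrite -mulmxA Ab mulmx0.
  by rewrite raddfD /= mulmxDl !mulmxDr bcA cAb addr0 add0r mxE.
rewrite detE mulr_ge0 ?mulmx_trmx_row_ge0 //= ler_wpM2r // aE.
by rewrite lerDl mulmx_trmx_row_ge0.
Qed.

Lemma det_gram_le n p (A : 'M[R]_(n, p)) :
  0 <= \det (A *m A^T) <= \prod_i \sum_j A i j ^+ 2.
Proof.
elim: n A => [|n IHn]; first by move=> A; rewrite det_mx00 big_ord0 lexx ler01.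
change n.+1 with (1 + n)%N => A; rewrite -[A]vsubmxK.
set a := usubmx A; set A' := dsubmx A.
have /andP [G'_ge0 G'_le] := IHn A'.
have /andP [G_ge0 G_le] := det_gram_col_mx a G'_ge0.
rewrite G_ge0 (le_trans G_le) // big_split_ord big_ord1 mulmx_trmx_row.
apply: ler_pM => //; first by apply: sumr_ge0 => j _; apply: sqr_ge0.
  by under [X in _ <= X]eq_bigr do rewrite col_mxEu.
by under [X in _ <= X]eq_bigr do under eq_bigr do rewrite col_mxEd.
Qed.

Lemma hadamard_sqr n (A : 'M[R]_n) : \det A ^+ 2 <= \prod_i \sum_j A i j ^+ 2.
Proof. by rewrite expr2 -{2}det_tr -det_mulmx; case/andP: (det_gram_le A). Qed.

End GramDeterminant.

Definition hadamard_bound (R : rcfType) (Delta n : nat) : R :=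
  Delta%:R ^+ n * Num.sqrt n%:R ^+ n.

Lemma det_int_le_hadamard_bound (R : rcfType) (Delta k : nat) (C : 'M[int]_k) :
  (forall i j, `|C i j| <= Delta%:Z) ->
  (`|\det C|%N)%:R <= hadamard_bound R Delta k.
Proof.
move=> C_le; set CR := map_mx (fun z : int => z%:~R : R) C.
have detCR_le : \det CR ^+ 2 <= (Delta%:R ^+ 2 *+ k) ^+ k.
  apply: le_trans (hadamard_sqr CR) _.
  rewrite -[X in _ ^+ X](card_ord k) -prodr_const; apply: ler_prod => i _.
  rewrite sumr_ge0 => [|j _]; last exact: sqr_ge0.
  rewrite -[X in _ *+ X](card_ord k) -sumr_const; apply: ler_sum => j _.
  rewrite mxE -real_normK ?num_real // ler_pXn2r ?nnegrE ?ler0n //.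
  by rewrite -intr_norm -[Delta%:R]/((Delta%:Z)%:~R) ler_int.
rewrite natr_absz intr_norm -det_map_mx -/CR.
rewrite -(@ler_pXn2r _ 2) ?nnegrE ?mulr_ge0 ?exprn_ge0 ?sqrtr_ge0 ?ler0n //.
rewrite real_normK ?num_real //; apply: le_trans detCR_le _.
rewrite /hadamard_bound exprMn -!exprM mulnC !exprM sqr_sqrtr ?ler0n //.
by rewrite -exprMn mulr_natr.
Qed.

Lemma hadamard_bound_ge0 (R : rcfType) (Delta n : nat) : 0 <= hadamard_bound R Delta n.
Proof. by rewrite mulr_ge0 ?exprn_ge0 ?sqrtr_ge0 ?ler0n. Qed.

Lemma hadamard_bound_mono (R : rcfType) (Delta k m : nat) :
  (0 < Delta)%N -> (0 < m)%N -> (k <= m)%N ->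
  hadamard_bound R Delta k <= hadamard_bound R Delta m.
Proof.
move=> Delta_gt0 m_gt0 km; rewrite /hadamard_bound -!exprMn.
have base_ge1 : 1 <= Delta%:R * Num.sqrt m%:R :> R.
  apply: mulr_ege1; first by rewrite ler1n.
  by rewrite -[X in X <= _]sqrtr1 ler_sqrt ?ler1n ?ler0n.
apply: le_trans (ler_weXn2l base_ge1 km).
rewrite lerXn2r ?nnegrE ?mulr_ge0 ?sqrtr_ge0 ?ler0n //.
by rewrite ler_wpM2l ?ler0n // ler_sqrt ?ler_nat ?ler0n.
Qed.

Section ConicCaratheodory.
Variable R : realFieldType.

Lemma mulmx_drop_zero_coef p k (mu : 'rV[R]_k.+1) (M : 'M[R]_(k.+1, p)) i0 :
  mu 0 i0 = 0 -> colsub (lift i0) mu *m rowsub (lift i0) M = mu *m M.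
Proof.
move=> mu_i0; apply/rowP => c; rewrite !mxE (bigD1_ord i0) //= mu_i0 mul0r add0r.
by apply: eq_bigr => j _; rewrite !mxE.
Qed.

Lemma conic_combination_zero_coef p k (mu : 'rV[R]_k) (M : 'M[R]_(k, p)) :
  (forall i, 0 < mu 0 i) -> ~~ row_free M ->
  exists2 mu' : 'rV[R]_k, (forall i, 0 <= mu' 0 i) /\ mu' *m M = mu *m M
    & exists i0, mu' 0 i0 = 0.
Proof.
move=> mu_gt0; rewrite -kermx_eq0 => /rowV0Pn [u /sub_kermxP uM0 /rV0Pn [j0 u_j0]].
have [nu nuM0 nu_j0] : exists2 nu : 'rV[R]_k, nu *m M = 0 & 0 < nu 0 j0.
  exists ((u 0 j0)^-1 *: u); first by rewrite -scalemxAl uM0 scaler0.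
  by rewrite mxE mulVf.
(* Move from [mu] along [- nu] until the first coordinate vanishes. *)
have [i1 nu_i1 i1_min] :=
  @arg_minP _ _ _ j0 (fun i => 0 < nu 0 i) (fun i => mu 0 i / nu 0 i) nu_j0.
pose t := mu 0 i1 / nu 0 i1.
exists (mu - t *: nu); last by exists i1; rewrite !mxE /t divfK ?subrr // gt_eqF.
split; last by rewrite mulmxBl -scalemxAl nuM0 scaler0 subr0.
move=> i; rewrite !mxE subr_ge0; have [nu_i_gt0 | nu_i_le0] := ltP 0 (nu 0 i).
  by rewrite -ler_pdivlMr //; exact: i1_min.
apply: le_trans (ltW (mu_gt0 i)); apply: mulr_ge0_le0 => //.
by rewrite divr_ge0 // ltW.
Qed.

Lemma conic_caratheodory p k (mu : 'rV[R]_k) (M : 'M[R]_(k, p)) :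
  (forall i, 0 <= mu 0 i) ->
  exists k' (f : 'I_k' -> 'I_k) (mu' : 'rV[R]_k'),
    [/\ injective f, forall i, 0 < mu' 0 i, mu' *m rowsub f M = mu *m M
      & row_free (rowsub f M)].
Proof.
elim: k mu M => [|k IHk] mu M mu_ge0.
  by exists 0%N, id, mu; rewrite mxsub_id -row_leq_rank; split => //; case.
have drop_zero (mu2 : 'rV[R]_k.+1) : (forall i, 0 <= mu2 0 i) -> mu2 *m M = mu *m M ->
    (exists i0, mu2 0 i0 = 0) ->
  exists k' (f : 'I_k' -> 'I_k.+1) (mu' : 'rV[R]_k'),
    [/\ injective f, forall i, 0 < mu' 0 i, mu' *m rowsub f M = mu *m M
      & row_free (rowsub f M)].
  move=> mu2_ge0 mu2M [i0 mu2_i0].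
  have [|k' [f [mu' [f_inj mu'_gt0 mu'M free]]]] :=
    IHk (colsub (lift i0) mu2) (rowsub (lift i0) M).
    by move=> i; rewrite mxE.
  exists k', (lift i0 \o f), mu'; rewrite rowsub_comp; split => //.
    exact: inj_comp (@lift_inj _ i0) f_inj.
  by rewrite mu'M mulmx_drop_zero_coef.
have [i0 /eqP mu_i0 | mu_neq0] := pickP (fun i => mu 0 i == 0).
  by apply: (drop_zero mu) => //; exists i0.
have mu_gt0 i : 0 < mu 0 i by rewrite lt_def mu_neq0 mu_ge0.
have [freeM | nfreeM] := boolP (row_free M).
  by exists k.+1, id, mu; rewrite mxsub_id; split.
have [mu2 [mu2_ge0 mu2M] mu2_0] := conic_combination_zero_coef mu_gt0 nfreeM.
exact: drop_zero mu2_ge0 mu2M mu2_0.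
Qed.

End ConicCaratheodory.

Lemma row_free_colsub_unit (F : fieldType) k m (A : 'M[F]_(k, m)) :
  row_free A -> exists g : 'I_k -> 'I_m, colsub g A \in unitmx.
Proof.
move=> freeA; have fullAT : row_full A^T by rewrite /row_full mxrank_tr.
by exists (fullrankfun fullAT); rewrite -unitmx_tr trmx_mxsub fullrowsub_unit.
Qed.

Lemma cramer_entry (R : comRingType) k (A : 'M[R]_k) (v : 'rV[R]_k) i :
  (v *m \adj A) 0 i = \det (\matrix_(r, c) if r == i then v 0 c else A r c).
Proof.
rewrite (expand_det_row _ i) mxE; apply: eq_bigr => j _; rewrite !mxE eqxx.
congr (_ * _); rewrite /cofactor; congr (_ * \det _).
by apply/matrixP => r c; rewrite !mxE eq_sym (negbTE (neq_lift _ _)).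
Qed.

Section IntegralRescaling.
Variables (R : realFieldType) (k m : nat) (g : 'I_k -> 'I_m).
Variables (M : 'M[int]_(k, m)) (v : 'rV[int]_m) (mu : 'rV[R]_k).
Local Notation intmx := (map_mx (fun z : int => z%:~R : R)).
Hypothesis mu_gt0 : forall i, 0 < mu 0 i.
Hypothesis muM : mu *m intmx M = intmx v.

Lemma cramer_rescaling :
  \sum_i `|(colsub g v *m \adj (colsub g M)) 0 i| *: row i M
    = `|\det (colsub g M)| *: v.
Proof.
set B := colsub g M; set w := colsub g v *m \adj B.
have muB : mu *m intmx B = intmx (colsub g v) by rewrite !map_mxsub mulmx_colsub muM.
have wE i : (w 0 i)%:~R = (\det B)%:~R * mu 0 i :> R.
  have : intmx w = (\det B)%:~R *: mu.
    by rewrite map_mxM map_mx_adj -muB -mulmxA mul_mx_adj det_map_mx mul_mx_scalar.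
  by move/rowP/(_ i); rewrite !mxE; apply.
have wM : w *m M = \det B *: v.
  apply/rowP => c; apply: (@intr_inj R); rewrite !mxE rmorphM rmorph_sum /=.
  have /rowP/(_ c) := muM; rewrite !mxE => <-; rewrite mulr_sumr.
  by apply: eq_bigr => i _; rewrite rmorphM /= wE mxE mulrA.
have sg_w i : Num.sg (w 0 i) = Num.sg (\det B).
  by apply: (@intr_inj R); rewrite !intr_sg wE sgrM (gtr0_sg (mu_gt0 i)) mulr1.
rewrite normrEsg -scalerA -wM mulmx_sum_row scaler_sumr.
by apply: eq_bigr => i _; rewrite normrEsg sg_w scalerA.
Qed.

End IntegralRescaling.

Lemma int_conic_caratheodory (R : rcfType) (Delta n m : nat)
    (A : 'M[int]_(n, m)) (v : 'rV[int]_m) (mu : 'rV[R]_n) :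
  (0 < Delta)%N -> (0 < m)%N ->
  (forall i j, `|A i j| <= Delta%:Z) -> (forall j, `|v 0 j| <= Delta%:Z) ->
  (forall i, 0 <= mu 0 i) ->
  mu *m map_mx (fun z : int => z%:~R : R) A = map_mx (fun z : int => z%:~R : R) v ->
  exists (d : nat) (w : 'I_n -> nat),
    [/\ (0 < d)%N, (#|[pred i | w i != 0%N]| <= m)%N,
        d%:R <= hadamard_bound R Delta m, forall i, (w i)%:R <= hadamard_bound R Delta m
      & \sum_i (w i)%:Z *: row i A = d%:Z *: v].
Proof.
move=> Delta_gt0 m_gt0 A_le v_le mu_ge0 muA.
have [k [f [mu' [f_inj mu'_gt0 mu'A freeAf]]]] :=
  conic_caratheodory (map_mx (fun z : int => z%:~R : R) A) mu_ge0.
rewrite -map_mxsub muA in mu'A; rewrite -map_mxsub in freeAf.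
set Af := rowsub f A in mu'A freeAf.
have km : (k <= m)%N by rewrite -(eqP freeAf) rank_leq_col.
have [g unit_g] := row_free_colsub_unit freeAf.
have := cramer_rescaling g mu'_gt0 mu'A.
set d := \det (colsub g Af); set w := colsub g v *m \adj (colsub g Af) => rescale.
have d_neq0 : d != 0.
  by move: unit_g; rewrite -map_mxsub unitmxE det_map_mx unitfE intr_eq0.
have det_le (C : 'M[int]_k) : (forall i j, `|C i j| <= Delta%:Z) ->
    (`|\det C|%N)%:R <= hadamard_bound R Delta m.
  move=> C_le; apply: le_trans (hadamard_bound_mono _ Delta_gt0 m_gt0 km).
  exact: det_int_le_hadamard_bound.
pose W j := (\sum_(i | f i == j) `|w 0%R i|)%N.
have W_f i : W (f i) = `|w 0%R i|%N.
  by rewrite /W (big_pred1 i) // => i'; rewrite /= (inj_eq f_inj).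
have W_out j : j \notin codom f -> W j = 0%N.
  move=> j_out; rewrite /W big_pred0 // => i; apply: contraNF j_out => /eqP <-.
  exact: codom_f.
exists `|d|%N, W; split.
- by rewrite absz_gt0.
- apply: leq_trans km; rewrite -[k]card_ord -(card_codom f_inj).
  by apply/subset_leq_card/subsetP => j; apply: contraNT => /W_out ->.
- by apply: det_le => i j; rewrite !mxE.
- move=> j; have [/codomP [i ->] | /W_out ->] := boolP (j \in codom f).
    rewrite W_f cramer_entry; apply: det_le => r c; rewrite !mxE.
    by case: eqP => _; rewrite ?mxE.
  exact: hadamard_bound_ge0.
rewrite abszE -rescale (partition_big f xpredT) //=; apply: eq_bigr => j _.
rewrite -natz natr_sum scaler_suml; apply: eq_bigr => i /eqP <-.
by rewrite natz abszE row_rowsub.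
Qed.

Local Open Scope fset_scope.

Lemma in_cone_int_caratheodory (R : rcfType) (Delta m : nat)
    (Y : {fset 'rV[int]_m}) (v : 'rV[int]_m) :
  (0 < Delta)%N -> (0 < m)%N ->
  (forall y, y \in Y -> forall j, `|y 0 j| <= Delta%:Z) -> (forall j, `|v 0 j| <= Delta%:Z) ->
  in_cone Y (map_mx (fun z : int => z%:~R : R) v) ->
  exists (d : nat) (lam : 'rV[int]_m -> nat),
    [/\ (0 < d)%N, (#|` [fset y in Y | lam y != 0%N]| <= m)%N,
        d%:R <= hadamard_bound R Delta m, forall y, (lam y)%:R <= hadamard_bound R Delta m
      & \sum_(y <- Y) (lam y)%:Z *: y = d%:Z *: v].
Proof.
move=> Delta_gt0 m_gt0 Y_le v_le [mu [mu_ge0 muE]].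
set s : seq _ := Y.
pose A : 'M[int]_(size s, m) := \matrix_j s`_j.
have [|i||d [w [d_gt0 w_supp d_le w_le wA]]] :=
  int_conic_caratheodory (mu := \row_j mu s`_j) (A := A) Delta_gt0 m_gt0 _ v_le.
- by move=> i j; rewrite mxE Y_le ?mem_nth.
- by rewrite mxE mu_ge0 ?mem_nth.
- rewrite muE mulmx_sum_row (big_nth 0) big_mkord.
  by apply: eq_bigr => j _; rewrite mxE -map_row rowK.
pose lam y := oapp w 0%N (insub (index y s)).
have lam_nth (j : 'I_(size s)) : lam s`_j = w j.
  by rewrite /lam index_uniq ?fset_uniq // valK.
exists d, lam; split => //.
- have supp : {subset [fset y in Y | lam y != 0%N]
                  <= [seq s`_j | j : 'I_(size s) in [pred j | w j != 0%N]]}.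
    move=> y; rewrite !inE => /andP [_]; rewrite /lam.
    case: insubP => //= j _ j_idx w_j.
    have -> : y = s`_j by rewrite j_idx nth_index // -index_mem -j_idx.
    exact: (image_f (fun j : 'I_(size s) => s`_j)).
  by apply: leq_trans (uniq_leq_size (fset_uniq _) supp) _; rewrite size_image.
- move=> y; rewrite /lam.
  by case: insubP => [j _ _|_]; [exact: w_le | exact: hadamard_bound_ge0].
- rewrite -wA (big_nth 0) big_mkord.
  by apply: eq_bigr => j _; rewrite lam_nth rowK.
Qed.

Theorem lemma11 (R : rcfType) (m Delta : nat) (X : {fset 'rV[int]_m}) (x : 'rV[int]_m) :
  (0 < m)%N -> (0 < Delta)%N ->
  (forall y, y \in X -> forall i, `|y 0 i| <= Delta%:Z) ->
  x \in X ->
  in_cone (X `\ x) (- map_mx (fun z : int => z%:~R : R) x) ->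
  exists lam : 'rV[int]_m -> nat,
    [/\ (0 < lam x)%N,
        (#|` [fset y in X | lam y != 0%N]| <= m.+1)%N,
        (forall y, y \in X -> (lam y)%:R <= (Delta%:R : R) ^+ m * Num.sqrt (m%:R : R) ^+ m)
      & - ((lam x)%:Z *: x) = \sum_(y <- X `\ x) (lam y)%:Z *: y].
Proof.
move=> m_gt0 Delta_gt0 X_le xX; rewrite -map_mxN => cone_x.
have [||d [lam [d_gt0 lam_supp d_le lam_le lamE]]] :=
  in_cone_int_caratheodory Delta_gt0 m_gt0 _ _ cone_x.
- by move=> y /fsetD1P [_ /X_le].
- by move=> j; rewrite mxE normrN X_le.
exists (fun y => if y == x then d else lam y); split.
- by rewrite eqxx.
- have supp : [fset y in X | (if y == x then d else lam y) != 0%N]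
                `<=` x |` [fset y in X `\ x | lam y != 0%N].
    apply/fsubsetP => y; rewrite !inE.
    by case: (eqVneq y x).
  apply: leq_trans (fsubset_leq_card supp) _.
  by rewrite cardfsU1; exact: leq_add (leq_b1 _) lam_supp.
- by move=> y _; case: eqP.
- rewrite eqxx -scalerN -lamE; apply: eq_big_seq => y.
  by rewrite in_fsetD1 => /andP [/negbTE ->].
Qed.
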